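(* Let $(A,[\cdot,\cdot])$ be an Acaa-algebra over a field $\mathbb K$ of characteristic $0$, and let $e,f\in A$ be linearly independent. If $[e,f]\neq 0$, then $e,f,[e,f]$ are linearly independent.
   Context: An Acaa-algebra over a field $\mathbb K$ of characteristic $0$ is a $\mathbb K$-vector space $A$ with a bilinear product $[\cdot,\cdot]$ which is anticommutative, $[x,y]=-[y,x]$, and satisfies $[x_1,[x_2,x_3]]=[x_2,[x_3,x_1]]$ for all $x_1,x_2,x_3\in A$. *)

From mathcomp Require Import all_boot all_algebra.
Set Implicit Arguments. Unset Strict Implicit. Unset Printing Implicit Defensive.
Import GRing.Theory.
Local Open Scope ring_scope.

Definition bilinear_prod (K : fieldType) (A : lmodType K) (br : A -> A -> A) :=
  (forall a : K, forall x y z : A, br (a *: x + y) z = a *: br x z + br y z) /\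
  (forall a : K, forall x y z : A, br x (a *: y + z) = a *: br x y + br x z).

Definition acaa_algebra (K : fieldType) (A : lmodType K) (br : A -> A -> A) :=
  [/\ bilinear_prod br,
      (forall x y : A, br x y = - br y x) &
      (forall x1 x2 x3 : A, br x1 (br x2 x3) = br x2 (br x3 x1))].

(* Linear independence of two / three vectors (A may be infinite-dimensional). *)
Definition lin_indep2 (K : fieldType) (A : lmodType K) (u v : A) :=
  forall a b : K, a *: u + b *: v = 0 -> a = 0 /\ b = 0.

Definition lin_indep3 (K : fieldType) (A : lmodType K) (u v w : A) :=
  forall a b c : K, a *: u + b *: v + c *: w = 0 -> [/\ a = 0, b = 0 & c = 0].

(* Both [e] and [f] annihilate [[e,f]]: anticommutativity and the Acaa identity give
   [e,[e,f]] = [e,[f,e]] = -[e,[e,f]], which vanishes in characteristic 0, and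
   [f,[e,f]] = [e,[f,f]] = 0. Bracketing a relation a e + b f + c [e,f] = 0 with [e]
   and with [f] therefore leaves b [e,f] = 0 and a [f,e] = 0, so a = b = 0 and then
   c = 0, since [e,f] != 0. *)
From mathcomp Require Import all_boot all_algebra.
Set Implicit Arguments. Unset Strict Implicit. Unset Printing Implicit Defensive.
Import GRing.Theory.
Local Open Scope ring_scope.

Lemma pchar0_eqNr_eq0 (K : fieldType) (V : lmodType K) (x : V) :
  [pchar K] =i pred0 -> x = - x -> x = 0.
Proof.
move=> /pcharf0P charK0 xN; apply/eqP.
have : (2%:R : K) *: x == 0 by rewrite scaler_nat mulr2n {1}xN addNr.
by rewrite scaler_eq0 charK0.
Qed.

Section AcaaAlgebra.

Variables (K : fieldType) (A : lmodType K) (br : A -> A -> A).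
Hypothesis charK0 : [pchar K] =i pred0.
Hypothesis acaaA : acaa_algebra br.

Lemma brDr (x u v : A) : br x (u + v) = br x u + br x v.
Proof. by case: acaaA => [[_ brr] _ _]; rewrite -{1}[u]scale1r brr scale1r. Qed.

Lemma br0r (x : A) : br x 0 = 0.
Proof. by apply: (addrI (br x 0)); rewrite -brDr !addr0. Qed.

Lemma brZr (x u : A) (k : K) : br x (k *: u) = k *: br x u.
Proof. by case: acaaA => [[_ brr] _ _]; rewrite -[k *: u]addr0 brr br0r addr0. Qed.

Lemma br_anticomm (x y : A) : br x y = - br y x.
Proof. by case: acaaA. Qed.

Lemma br_cycle (x y z : A) : br x (br y z) = br y (br z x).
Proof. by case: acaaA. Qed.

Lemma brxx (x : A) : br x x = 0.
Proof. exact/(pchar0_eqNr_eq0 charK0)/br_anticomm. Qed.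

Lemma brl_br_eq0 (x y : A) : br x (br x y) = 0.
Proof.
apply: (pchar0_eqNr_eq0 charK0).
by rewrite {1}br_cycle [br y x]br_anticomm -scaleN1r brZr scaleN1r.
Qed.

Lemma brr_br_eq0 (x y : A) : br y (br x y) = 0.
Proof. by rewrite br_cycle brxx br0r. Qed.

End AcaaAlgebra.

Theorem mainTheorem2 (K : fieldType) (A : lmodType K) (br : A -> A -> A)
  (hchar : [pchar K] =i pred0)
  (hA : acaa_algebra br)
  (e f : A) (hef : lin_indep2 e f) (hne : br e f != 0) :
  lin_indep3 e f (br e f).
Proof.
have scale_brl_eq0 (k : K) : k *: br e f = 0 -> k = 0.
  by move/eqP; rewrite scaler_eq0 (negbTE hne) orbF => /eqP.
move=> a b c rel.
have br_rel x : br x (a *: e + b *: f + c *: br e f) = 0 by rewrite rel (br0r hA).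
have b0 : b = 0.
  apply: scale_brl_eq0; move: (br_rel e).
  rewrite !(brDr hA, brZr hA) (brxx hchar hA) (brl_br_eq0 hchar hA).
  by rewrite !scaler0 add0r addr0.
have a0 : a = 0.
  apply: scale_brl_eq0; move: (br_rel f).
  rewrite !(brDr hA, brZr hA) (brxx hchar hA) (brr_br_eq0 hchar hA).
  rewrite !scaler0 !addr0 (br_anticomm hA f) scalerN.
  by move/eqP; rewrite oppr_eq0 => /eqP.
split=> //; apply: scale_brl_eq0.
by move: rel; rewrite a0 b0 !scale0r !add0r.
Qed.
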